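(* Let $X\subseteq\mathbb{N}$ be finite, $\omega^{n+1}$-large and exp-sparse, and let $c\in\mathbb{N}$ with $4^c\le\min X$. Then: (1) for any finite $W\subseteq\mathbb{N}$ with $|W|\le c$ and $\max W<\min X$, and any colouring $P:[W\cup X]^2\to2$, there exists an $\omega^n$-large $Y\subseteq X$ such that $P(w,y)=P(w,y')$ for all $w\in W$ and $y,y'\in Y$; (2) for any finite $W\subseteq\mathbb{N}$ with $|W|\le c$ and $\max X<\min W$, and any colouring $P:[X\cup W]^2\to2$, there exists an $\omega^n$-large $Y\subseteq X$ such that $P(y,w)=P(y',w)$ for all $w\in W$ and $y,y'\in Y$.
   Context: Ordinals below $\omega^\omega$ are in Cantor normal form; $\omega^j\cdot m$ = sum of $m$ copies of $\omega^j$. For $m\in\mathbb{N}$: $0[m]=0$, $(\beta+1)[m]=\beta$, $(\beta+\omega^{n})[m]=\beta+\omega^{n-1}\cdot m$ for $n\ge1$. A finite $X=\{x_0<\dots<x_{\ell-1}\}\subseteq\mathbb{N}$ is $\alpha$-large if $\alpha[x_0]\cdots[x_{\ell-1}]=0$. A set $X$ with $\min X\ge3$ is exp-sparse if $x<y$ in $X$ implies $4^x<y$. Pairs in $[Z]^2$ are written $(x,y)$ with $x<y$. *)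

From mathcomp Require Import all_boot.
Set Implicit Arguments. Unset Strict Implicit. Unset Printing Implicit Defensive.

(* Ordinals below omega^omega in Cantor normal form:
   the list [:: e1; ...; ek] (e1 >= ... >= ek) denotes omega^e1 + ... + omega^ek;
   [::] denotes 0 and omega^0 = 1. *)
Definition ord := seq nat.

Definition omega_pow (n : nat) : ord := [:: n].

(* Fundamental sequence a[m]:
   0[m] = 0, (b+1)[m] = b, (b + omega^(n+1))[m] = b + omega^n * m. *)
Definition fs (a : ord) (m : nat) : ord :=
  if a is [::] then [::] else
  let b := take (size a).-1 a in
  match last 0 a with
  | 0 => b
  | n.+1 => b ++ nseq m n
  end.

(* A finite set X, given as its increasing enumeration x0 < ... < x_(l-1),
   is a-large iff a[x0]...[x_(l-1)] = 0. *)
Definition large (a : ord) (X : seq nat) : bool := foldl fs a X == [::].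

(* finite subsets of N are represented by strictly increasing sequences *)
Definition fin_set (X : seq nat) : bool := sorted ltn X.

Definition exp_sparse (X : seq nat) : Prop :=
  (forall x, x \in X -> 3 <= x) /\
  (forall x y, x \in X -> y \in X -> x < y -> 4 ^ x < y).

From mathcomp Require Import all_boot zify.
Set Implicit Arguments. Unset Strict Implicit. Unset Printing Implicit Defensive.

(* Colour each y in X by the vector (P(w, y))_(w in W), with at most
   2^c < min X colours; it suffices that some colour class is omega^n-large.
   If none is, let a_t be what remains of omega^n after reading the class of t,
   and g what remains of omega^(n+1) after reading X.  The natural sum of the
   a_t starts as omega^n * #colours <= omega^(n+1) = g, and reading x of
   colour t replaces the last term omega^l of g and of a_t by omega^(l-1) * x,
   which preserves the inequality as long as the coefficients of the natural
   sum are below x.  Reading x lengthens the a_t by at most x in total, and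
   exp-sparseness puts the next element of X beyond 4^x, so the total length
   of the a_t, which bounds those coefficients, stays below the next element.
   Hence g never reaches 0. *)

Definition cnf (a : ord) : bool := pairwise geq a.

Definition mult (a : ord) (e : nat) : nat := count_mem e a.

Definition fs_mult (l m e : nat) : nat := if l is l'.+1 then (l' == e) * m else 0.

Lemma fs_rcons b l m :
  fs (rcons b l) m = b ++ (if l is l'.+1 then nseq m l' else [::]).
Proof.
rewrite /fs; case: b => [|x b] /=; first by case: l.
rewrite size_rcons last_rcons /= -cats1 take_size_cat //.
by case: l => [|l]; rewrite ?cats0.
Qed.

Lemma mult_rcons b l e : mult (rcons b l) e = mult b e + (l == e).
Proof. by rewrite /mult -cats1 count_cat /= addn0. Qed.

Lemma mult_fs_rcons b l m e : mult (fs (rcons b l) m) e = mult b e + fs_mult l m e.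
Proof. by rewrite fs_rcons /mult count_cat; case: l => [|l] //=; rewrite count_nseq. Qed.

Lemma fs_mult_eq0 l m e : (l == 0) || (l.-1 != e) -> fs_mult l m e = 0.
Proof. by case: l => [|l] //= /negbTE ->. Qed.

Lemma fs_mult_pred l m : 0 < l -> fs_mult l m l.-1 = m.
Proof. by case: l => [|l] //= _; rewrite eqxx mul1n. Qed.

Lemma cnf_rcons_mult b l e : cnf (rcons b l) -> e < l -> mult b e = 0.
Proof.
rewrite /cnf pairwise_rcons => /andP [/allP geq_l _] lt_el.
by apply/count_memPn/negP => /geq_l /=; lia.
Qed.

Lemma cnf_fs a m : cnf a -> cnf (fs a m).
Proof.
case/lastP: a => [|b l] //; rewrite /cnf fs_rcons pairwise_rcons.
case: l => [|l] /andP [/allP geq_l cnf_b]; first by rewrite cats0.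
rewrite pairwise_cat cnf_b /=; apply/andP; split.
  by apply/allrelP => x y /geq_l /= ? /nseqP [-> _]; lia.
by elim: m => [|m IHm] //=; rewrite IHm andbT; apply/allP => y /nseqP [-> _] /=.
Qed.

Lemma size_fs a m : size (fs a m) <= size a + m.
Proof.
case/lastP: a => [|b l] //; rewrite fs_rcons size_cat size_rcons.
by case: l => [|l]; rewrite ?size_nseq /=; lia.
Qed.

Lemma large_nil s : large [::] s.
Proof. by elim: s. Qed.

(* An ordinal below omega^omega is handled through its multiplicity function
   [e |-> number of omega^e in its normal form]; on normal forms, the ordinal
   order is the reverse lexicographic order of these functions. *)
Definition cnf_lt (f g : nat -> nat) : Prop :=
  exists e, f e < g e /\ forall e', e < e' -> f e' = g e'.

Definition cnf_le (f g : nat -> nat) : Prop := f =1 g \/ cnf_lt f g.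

Lemma eq_cnf_le f g f' g' : f =1 f' -> g =1 g' -> cnf_le f g -> cnf_le f' g'.
Proof.
move=> eq_f eq_g [eq_fg | [e [lt_e eq_above]]].
  by left => e; rewrite -eq_f -eq_g.
by right; exists e; split=> [|e' /eq_above]; rewrite -eq_f -eq_g.
Qed.

Lemma cnf_lt_le_trans f g h : cnf_lt f g -> cnf_le g h -> cnf_lt f h.
Proof.
move=> [e1 [lt1 eq1]] [eq_gh | [e2 [lt2 eq2]]].
  by exists e1; split=> [|e' /eq1 ->]; rewrite -eq_gh.
exists (maxn e1 e2); split=> [|e' lt_e']; last first.
  by rewrite eq1 ?eq2 //; apply: leq_ltn_trans lt_e'; rewrite ?leq_maxl ?leq_maxr.
case: (ltngtP e1 e2) => [lt_12 | lt_21 | eq_12].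
- by rewrite eq1.
- by rewrite -eq2.
- by subst e2; apply: ltn_trans lt2.
Qed.

(* The block omega^(l-1) * m of (b + omega^l)[m] dominates whatever d has
   below omega^l, since all coefficients of d are below m. *)
Lemma cnf_le_fs_of_lt (b d : nat -> nat) l m :
  (forall e, e < l -> b e = 0) -> (forall e, d e < m) ->
  cnf_lt d (fun e => b e + (l == e)) -> cnf_le d (fun e => b e + fs_mult l m e).
Proof.
move=> b_below d_lt_m [e0 [lt_e0 eq_above]].
case: (ltngtP l e0) => [lt_l | lt_e0l | eq_l].
- right; exists e0; split; first by move: lt_e0; rewrite fs_mult_eq0; lia.
  by move=> e' lt_e'; have := eq_above e' lt_e'; rewrite fs_mult_eq0; lia.
- by move: lt_e0; rewrite b_below //; lia.
subst e0; have [eq_dl | lt_dl] : d l = b l \/ d l < b l by move: lt_e0; rewrite eqxx; lia.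
- case: (posnP l) => [l0 | l_gt0].
    left => e; rewrite fs_mult_eq0 ?l0 // addn0; case: (posnP e) => [-> | e_gt0].
      by rewrite -l0.
    by have := eq_above e; rewrite l0; lia.
  right; exists l.-1; split; first by rewrite fs_mult_pred // b_below ?d_lt_m //; lia.
  move=> e' lt_e'; rewrite fs_mult_eq0; last by lia.
  case: (ltngtP e' l) => [| lt_le' | ->]; [lia | rewrite eq_above //; lia | lia].
- right; exists l; split; first by rewrite fs_mult_eq0 ?addn0 //; lia.
  by move=> e' lt_e'; have := eq_above e' lt_e'; rewrite fs_mult_eq0; lia.
Qed.

Lemma cnf_le_fs (b d : nat -> nat) l l' m :
  (forall e, e < l -> b e = 0) -> (forall e, d e + (l' == e) < m) ->
  cnf_le (fun e => d e + (l' == e)) (fun e => b e + (l == e)) ->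
  cnf_le (fun e => d e + fs_mult l' m e) (fun e => b e + fs_mult l m e).
Proof.
move=> b_below coef_lt [eq_dl | lt_dl].
- have le_ll' : l <= l'.
    by rewrite leqNgt; apply/negP => lt_l'l; have := eq_dl l'; rewrite b_below //; lia.
  case: (ltngtP l l') le_ll' => // [lt_ll' | eq_ll'] _; last first.
    by subst l'; left => e; have := eq_dl e; lia.
  right; exists l'; split.
    by have := eq_dl l'; rewrite (@fs_mult_eq0 l') ?(@fs_mult_eq0 l); lia.
  by move=> e' lt_e'; have := eq_dl e'; rewrite (@fs_mult_eq0 l') ?(@fs_mult_eq0 l); lia.
- right; apply: (@cnf_lt_le_trans _ (fun e => d e + (l' == e))).
    exists l'; split; first by rewrite eqxx fs_mult_eq0; lia.
    by move=> e' lt_e'; rewrite fs_mult_eq0; lia.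
  by apply: cnf_le_fs_of_lt lt_dl.
Qed.

Section ColourClasses.

Variables (T : finType) (col : nat -> T).

Definition colour_class (s : seq nat) (t : T) : seq nat := [seq y <- s | col y == t].

Definition nsum (r : T -> ord) (e : nat) : nat := \sum_t mult (r t) e.

Definition fs_class (r : T -> ord) (z : nat) (t : T) : ord :=
  if col z == t then fs (r t) z else r t.

Lemma large_colour_class_cons r z s t :
  large (r t) (colour_class (z :: s) t) = large (fs_class r z t) (colour_class s t).
Proof. by rewrite /fs_class /=; case: eqP. Qed.

Lemma sum_fs_class (F : ord -> nat) r z :
  \sum_t F (fs_class r z t) = F (fs (r (col z)) z) + \sum_(t | t != col z) F (r t).
Proof.
rewrite (bigD1 (col z)) //= /fs_class eqxx; congr (_ + _).
by apply: eq_bigr => t; rewrite eq_sym => /negbTE ->.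
Qed.

Lemma nsum_le_size r e : nsum r e <= \sum_t size (r t).
Proof. by apply: leq_sum => t _; apply: count_size. Qed.

Lemma nsum_le_nonnil (t0 : T) r g :
  (forall t, r t != [::]) -> cnf_le (nsum r) (mult g) -> g != [::].
Proof.
move=> r_nonnil le_rg; apply: contraNneq (r_nonnil t0) => g_nil.
case r_t0: (r t0) => [|e a] //; exfalso.
have : 0 < nsum r e by rewrite /nsum (bigD1 t0) //= r_t0 /mult /= eqxx.
case: le_rg => [-> | [e' []]]; by rewrite g_nil.
Qed.

Lemma nsum_le_fs_class r g z :
  cnf g -> r (col z) != [::] -> g != [::] -> \sum_t size (r t) < z ->
  cnf_le (nsum r) (mult g) -> cnf_le (nsum (fs_class r z)) (mult (fs g z)).
Proof.
case/lastP: g => [|b l] // cnf_g.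
case/lastP r_z: (r (col z)) => [|b' l'] // _ _ size_lt le_rg.
pose d e := \sum_(t | t != col z) mult (r t) e + mult b' e.
have nsum_r e : nsum r e = d e + (l' == e).
  by rewrite /nsum (bigD1 (col z)) //= r_z mult_rcons /d; lia.
apply: (@eq_cnf_le (fun e => d e + fs_mult l' z e) (fun e => mult b e + fs_mult l z e)).
- move=> e; have := mult_fs_rcons b' l' z e.
  by rewrite /nsum sum_fs_class -r_z /d /mult /= => ->; lia.
- by move=> e; rewrite mult_fs_rcons.
apply: cnf_le_fs => [e | e |]; first exact: cnf_rcons_mult.
  by rewrite -nsum_r; apply: leq_ltn_trans (nsum_le_size r e) size_lt.
by apply: eq_cnf_le le_rg => // e; rewrite mult_rcons.
Qed.

Lemma not_large_of_nsum_le (t0 : T) s g r :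
  pairwise (fun x y => 4 ^ x < y) s -> cnf g ->
  (forall x, x \in s -> \sum_t size (r t) < x) ->
  (forall t, ~~ large (r t) (colour_class s t)) ->
  cnf_le (nsum r) (mult g) -> ~~ large g s.
Proof.
elim: s g r => [|z s IHs] g r sparse cnf_g size_lt small_classes le_rg.
  by apply: (nsum_le_nonnil t0 _ le_rg) => t; apply: small_classes.
have r_nonnil t : r t != [::].
  by apply: contraNneq (small_classes t) => ->; apply: large_nil.
have g_nonnil := nsum_le_nonnil t0 r_nonnil le_rg.
move: sparse; rewrite pairwise_cons => /andP [/allP sparse_z sparse].
have size_z := size_lt z (mem_head _ _).
apply: (IHs _ (fs_class r z)) => // [| x x_s | t |].
- exact: cnf_fs.
- have lt_zx := sparse_z x x_s.
  have size_fs_class : \sum_t size (fs_class r z t) <= \sum_t size (r t) + z.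
    rewrite sum_fs_class [\sum_t size (r t)](bigD1 (col z)) //=.
    have := size_fs (r (col z)) z; lia.
  have z_lt_pow2 : z < 2 ^ z by apply: ltn_expl.
  have exp4 : 4 ^ z = 2 ^ z * 2 ^ z by rewrite -expnMn.
  nia.
- by rewrite -large_colour_class_cons.
- exact: nsum_le_fs_class.
Qed.

End ColourClasses.

Lemma exists_large_colour_class (T : finType) (col : nat -> T) n X :
  fin_set X -> exp_sparse X -> (forall x, x \in X -> #|T| < x) ->
  large (omega_pow n.+1) X -> exists t, large (omega_pow n) (colour_class col X t).
Proof.
move=> fin_X [_ sparse] card_lt large_X.
have [/existsP [t large_t] | /existsPn small_classes] :=
  boolP [exists t, large (omega_pow n) (colour_class col X t)]; first by exists t.
suff : ~~ large (omega_pow n.+1) X by rewrite large_X.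
apply: (@not_large_of_nsum_le T col (col 0) X _ (fun=> omega_pow n)) => // [| x x_X |].
- apply: (sub_in_pairwise (P := mem X)) (allss X) _ => [x y x_X y_X | ]; first exact: sparse.
  by rewrite -sorted_pairwise //; apply: ltn_trans.
- by rewrite sum1_card; apply: card_lt.
- right; exists n.+1; rewrite /nsum /mult.
  by split => [| e lt_e]; rewrite big1 => [| t _] /=; lia.
Qed.

Lemma homogeneous_large_subset n X c (W : seq nat) (Q : nat -> nat -> bool) :
  fin_set X -> large (omega_pow n.+1) X -> exp_sparse X ->
  (forall x, x \in X -> 4 ^ c <= x) -> size W <= c ->
  exists Y : seq nat,
    [/\ fin_set Y, {subset Y <= X}, large (omega_pow n) Y &
        forall w y y', w \in W -> y \in Y -> y' \in Y -> Q w y = Q w y'].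
Proof.
move=> fin_X large_X sparse_X c_le size_W.
pose col y := [tuple Q (nth 0 W i) y | i < size W].
have card_lt x : x \in X -> #|{: (size W).-tuple bool}| < x.
  move=> X_x; rewrite card_tuple card_bool.
  have := c_le x X_x; have := sparse_X.1 x X_x.
  have : 2 ^ size W <= 2 ^ c by rewrite leq_exp2l.
  have : 4 ^ c = 2 ^ c * 2 ^ c by rewrite -expnMn.
  have : 0 < 2 ^ c by rewrite expn_gt0.
  nia.
have [t large_t] := exists_large_colour_class col fin_X sparse_X card_lt large_X.
exists (colour_class col X t); split => //.
- by apply: sorted_filter fin_X; apply: ltn_trans.
- by move=> y; rewrite mem_filter => /andP [].
move=> w y y' W_w; rewrite !mem_filter => /andP [/eqP col_y _] /andP [/eqP col_y' _].
have w_idx : index w W < size W by rewrite index_mem.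
have := congr1 (fun u => tnth u (Ordinal w_idx)) (etrans col_y (esym col_y')).
by rewrite !tnth_mktuple nth_index.
Qed.

Theorem lemma2p5 (n : nat) (X : seq nat) (c : nat) :
  fin_set X -> large (omega_pow n.+1) X -> exp_sparse X ->
  (forall x, x \in X -> 4 ^ c <= x) ->
  (forall (W : seq nat) (P : nat -> nat -> bool),
      uniq W -> size W <= c ->
      (forall w x, w \in W -> x \in X -> w < x) ->
      exists Y : seq nat,
        [/\ fin_set Y, {subset Y <= X}, large (omega_pow n) Y &
            forall w y y', w \in W -> y \in Y -> y' \in Y -> P w y = P w y'])
  /\
  (forall (W : seq nat) (P : nat -> nat -> bool),
      uniq W -> size W <= c ->
      (forall x w, x \in X -> w \in W -> x < w) ->
      exists Y : seq nat,
        [/\ fin_set Y, {subset Y <= X}, large (omega_pow n) Y &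
            forall w y y', w \in W -> y \in Y -> y' \in Y -> P y w = P y' w]).
Proof.
move=> fin_X large_X sparse_X c_le.
split=> W P _ size_W _.
- exact: homogeneous_large_subset P fin_X large_X sparse_X c_le size_W.
- exact: homogeneous_large_subset (fun w y => P y w) fin_X large_X sparse_X c_le size_W.
Qed.
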